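(* Let $n\ge2$, let $f=(f_1,\dots,f_n):\{-1,1\}^n\to\{-1,1\}^n$ be a bijection, and let $k$ be an integer with $1\le k\le n-1$. Then $\deg(f_i)=1$ for all $i\in[n]$ if and only if for every $S\subset[n]$ with $|S|=k$ there exists $T\subset[n]$ with $|T|=k$ such that: (a) for every $j\in T$, $\mathrm{Inf}_i(f_j)>0$ for at least one $i\in S$; and (b) for every $j\in[n]\setminus T$, $\mathrm{Inf}_i(f_j)=0$ for every $i\in S$.
   Context: For $f:\{-1,1\}^n\to\mathbb{R}$, $f=\sum_{S\subseteq[n]}\hat f(S)\chi_S$ with $\chi_S(x)=\prod_{i\in S}x_i$, and $\deg(f)=\max\{|S|:\hat f(S)\ne0\}$. For $g:\{-1,1\}^n\to\{-1,1\}$ and $i\in[n]$, the influence is $\mathrm{Inf}_i(g):=\Pr_{x\sim U(\{-1,1\}^n)}[g(x)\ne g(x^{\oplus i})]$, where $x^{\oplus i}$ is $x$ with its $i$-th coordinate negated. *)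

From mathcomp Require Import all_boot all_order all_algebra.
Set Implicit Arguments. Unset Strict Implicit. Unset Printing Implicit Defensive.
Import Order.TTheory GRing.Theory Num.Theory.
Local Open Scope ring_scope.

(* The hypercube {-1,1}^n, encoded as boolean vectors: a bit b stands for
   the sign sgnb b, with true ↦ -1 and false ↦ 1. *)
Definition cube (n : nat) := {ffun 'I_n -> bool}.

Definition sgnb (b : bool) : rat := if b then -1 else 1.

Definition chi n (S : {set 'I_n}) (x : cube n) : rat := \prod_(i in S) sgnb (x i).

Definition fourier n (g : cube n -> rat) (S : {set 'I_n}) : rat :=
  (2%:R ^- n) * \sum_(x : cube n) g x * chi S x.

Definition fdeg n (g : cube n -> rat) : nat :=
  \max_(S : {set 'I_n} | fourier g S != 0) #|S|.

Definition flip n (x : cube n) (i : 'I_n) : cube n :=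
  [ffun j => if j == i then ~~ x j else x j].

Definition Inf n (g : cube n -> bool) (i : 'I_n) : rat :=
  #|[set x : cube n | g x != g (flip x i)]|%:R / (2%:R ^+ n).

Definition coordb n (f : cube n -> cube n) (j : 'I_n) : cube n -> bool :=
  fun x => f x j.
Definition coordr n (f : cube n -> cube n) (j : 'I_n) : cube n -> rat :=
  fun x => sgnb (f x j).

From mathcomp Require Import all_boot all_order all_algebra.
From mathcomp Require Import ring lra zify.
Import Order.TTheory GRing.Theory Num.Theory.
Local Open Scope ring_scope.
Set Implicit Arguments. Unset Strict Implicit. Unset Printing Implicit Defensive.

(* Since f is a bijection, every coordinate f_j depends on some variable and
   every variable influences some f_j.  A {-1,1}-valued function of degree at
   most 1 has vanishing second differences, hence depends on at most one
   variable.  So deg f_j = 1 for all j exactly when the relation "i influences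
   f_j" is the graph of a permutation, and then the set T of coordinates
   influenced by S, the only candidate for T, has |T| = |S|.  Conversely, if
   every k-set of variables influences exactly k coordinates, then every set of
   at most k variables influences at most as many coordinates, so each variable
   influences a single coordinate and counting makes the relation a
   permutation. *)

Lemma surj_inj (T : finType) (p : T -> T) : (forall y, exists x, p x = y) -> injective p.
Proof.
move=> p_surj; apply: in2T; apply/image_injP/eqP/eq_card => y.
by have [x <-] := p_surj y; rewrite image_f.
Qed.

Lemma sgnb_inj : injective sgnb.
Proof. by case=> [] [] //; rewrite /sgnb => /eqP; rewrite -subr_eq0. Qed.

Lemma sgnb_diff2_eq0 a b c d :
  sgnb a - sgnb b - sgnb c + sgnb d = 0 -> a != b -> c = a /\ d = b.
Proof. by case: a b c d => [] [] [] [] //; rewrite /sgnb => E _ //; exfalso; lra. Qed.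

Section Cube.
Variable n : nat.
Implicit Types (x y z : cube n) (i l : 'I_n) (S : {set 'I_n}).

Lemma flipE x i j : flip x i j = if j == i then ~~ x j else x j.
Proof. by rewrite /flip ffunE. Qed.

Lemma cube_flip_ind (P : cube n -> Prop) :
  (forall x i, P x -> P (flip x i)) -> forall x y, P x -> P y.
Proof.
move=> P_flip x y; have [m] := ubnP #|[set i | x i != y i]|.
elim: m x => // m IH x; case: (set_0Vmem [set i | x i != y i]) => [/setP xy _ | [i xyi] lt_m Px].
  suff -> : x = y by [].
  by apply/ffunP => i; move: (xy i); rewrite !inE => /negbFE/eqP.
apply: (IH (flip x i)) (P_flip _ _ Px).
suff -> : [set l | flip x i l != y l] = [set l | x l != y l] :\ i.
  by rewrite (cardsD1 i) xyi in lt_m.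
apply/setP => l; rewrite !inE flipE; case: (l =P i) => [->|] //=.
by move: xyi; rewrite inE; case: (x i); case: (y i).
Qed.

Lemma flipK i : involutive (fun x : cube n => flip x i).
Proof. by move=> x; apply/ffunP=> j; rewrite !flipE; case: eqP => // _; rewrite negbK. Qed.

Lemma flipC x i l : flip (flip x i) l = flip (flip x l) i.
Proof. by apply/ffunP=> j; rewrite !flipE; do 2 case: eqP. Qed.

Lemma flip_neq x i : flip x i != x.
Proof. by apply/eqP => /ffunP /(_ i); rewrite flipE eqxx; case: (x i). Qed.

Lemma chi_flip S x i :
  chi S (flip x i) = (if i \in S then -1 else 1) * chi S x.
Proof.
rewrite /chi; case: ifP => iS.
  rewrite (bigD1 i) //= [in RHS](bigD1 i) //= flipE eqxx mulrA mulN1r.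
  rewrite /sgnb; case: (x i); rewrite ?opprK; congr (_ * _); apply: eq_bigr => j /andP[_ ji];
    by rewrite flipE (negbTE ji).
rewrite mul1r; apply: eq_bigr => j jS; rewrite flipE; case: eqP => // ji.
by rewrite -ji jS in iS.
Qed.

Lemma sum_chiM x y :
  \sum_(S : {set 'I_n}) chi S x * chi S y = if x == y then 2%:R ^+ n else 0.
Proof.
have chiM S : chi S x * chi S y =
    \prod_(i : 'I_n) (if i \in S then sgnb (x i) * sgnb (y i) else 1).
  by rewrite /chi -big_split /= big_mkcond.
under eq_bigr do rewrite chiM.
rewrite -(bigA_distr 1 +%R (fun i => sgnb (x i) * sgnb (y i)) (fun=> 1)) /=.
case: eqP => [<-|/eqP xy].
  under eq_bigr => i _ do have -> : sgnb (x i) * sgnb (x i) + 1 = 2%:R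
     by case: (x i); rewrite /sgnb; lra.
  by rewrite prodr_const card_ord.
have [i xyi] : exists i, x i != y i.
  apply/existsP; apply: contraR xy => /existsPn xy; apply/eqP/ffunP => i.
  by apply/eqP; move: (xy i); rewrite negbK.
rewrite (bigD1 i) //=; move: xyi; case: (x i); case: (y i) => //= _;
  by rewrite /sgnb ?mulr1 ?mul1r addNr mul0r.
Qed.

Lemma fourier_expansion (g : cube n -> rat) y :
  g y = \sum_(S : {set 'I_n}) fourier g S * chi S y.
Proof.
transitivity (\sum_(x : cube n) 2%:R ^- n * g x *
                \sum_(S : {set 'I_n}) chi S x * chi S y); last first.
  under eq_bigr do rewrite mulr_sumr.
  rewrite exchange_big /=; apply: eq_bigr => S _.
  by rewrite /fourier mulr_sumr mulr_suml; apply: eq_bigr => x _; ring.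
under eq_bigr => x _ do rewrite sum_chiM.
rewrite (bigD1 y) //= eqxx big1 => [|x /negbTE ->]; last by rewrite mulr0.
by rewrite addr0 mulrAC mulVf ?mul1r // expf_neq0 // pnatr_eq0.
Qed.

Lemma fdeg_leP (g : cube n -> rat) m :
  reflect (forall S, fourier g S != 0 -> (#|S| <= m)%N) (fdeg g <= m)%N.
Proof. exact: bigmax_leqP. Qed.

Lemma card_le_fdeg (g : cube n -> rat) S : fourier g S != 0 -> (#|S| <= fdeg g)%N.
Proof. exact: (leq_bigmax_cond (F := fun S : {set 'I_n} => #|S|)). Qed.

Lemma fdeg_le1_diff2 (g : cube n -> rat) x i l : (fdeg g <= 1)%N -> i != l ->
  g x - g (flip x i) - g (flip x l) + g (flip (flip x i) l) = 0.
Proof.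
move=> /fdeg_leP g_le1 il.
rewrite !(fourier_expansion g) -!sumrB -big_split /=.
apply: big1 => S _; rewrite !chi_flip.
have [iS|] := boolP (i \in S); have [lS|] := boolP (l \in S); move=> *; try ring.
have S_gt1 : (1 < #|S|)%N.
  have il_sub : [set i; l] \subset S by rewrite subUset !sub1set iS lS.
  by move/subset_leq_card: il_sub; rewrite cards2 il.
have -> : fourier g S = 0 by apply: contraTeq S_gt1 => /g_le1; rewrite ltnNge negbK.
ring.
Qed.

Lemma fourier_eq0_invariant (g : cube n -> rat) S l :
  (forall x, g (flip x l) = g x) -> l \in S -> fourier g S = 0.
Proof.
move=> g_inv lS; rewrite /fourier; set s := \sum_(x : cube n) _.
suff s0 : s = 0 by rewrite s0 mulr0.
have s_opp : s = - s.
  rewrite {1}/s (reindex_inj (can_inj (flipK l))) -sumrN /=.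
  by apply: eq_bigr => x _; rewrite g_inv chi_flip lS; ring.
lra.
Qed.

Lemma fdeg0_const (g : cube n -> rat) x y : fdeg g = 0%N -> g x = g y.
Proof.
move=> g0; suff g_const z : g z = fourier g set0 by rewrite !g_const.
rewrite fourier_expansion (bigD1 set0) //= big1 => [|S S0].
  by rewrite addr0 /chi big_set0 mulr1.
have [->|/card_le_fdeg] := eqVneq (fourier g S) 0; first by rewrite mul0r.
by rewrite g0 leqn0 cards_eq0 (negbTE S0).
Qed.

Definition depends_on (h : cube n -> bool) i := [exists x, h x != h (flip x i)].

Lemma Inf_gt0 h i : (0 < Inf h i) = depends_on h i.
Proof.
rewrite /Inf ltr_pdivlMr ?exprn_gt0 ?ltr0n // mul0r ltr0n card_gt0.
by apply/set0Pn/existsP => -[x]; rewrite ?inE; exists x; rewrite ?inE.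
Qed.

Lemma Inf_eq0 h i : (Inf h i == 0) = ~~ depends_on h i.
Proof. by rewrite -Inf_gt0 lt0r divr_ge0 ?ler0n ?exprn_ge0 // andbT negbK. Qed.

Lemma depends_on_uniq (h : cube n -> bool) i l :
  (fdeg (fun x => sgnb (h x)) <= 1)%N -> depends_on h i -> depends_on h l -> i = l.
Proof.
move=> h_le1 /existsP[x hx] /existsP[y hy]; apply/eqP/negPn/negP => il.
have flip_other z l' : i != l' -> h z != h (flip z i) ->
    h (flip z l') = h z /\ h (flip (flip z i) l') = h (flip z i).
  by move=> il' hz; apply: sgnb_diff2_eq0 (fdeg_le1_diff2 _ h_le1 il') hz.
(* so [h z != h (flip z i)] survives every flip and holds on the whole cube *)
have {x hx} hi z : h z != h (flip z i).
  apply: (cube_flip_ind (P := fun z => h z != h (flip z i))) hx => w l' hw.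
  have [<-|il'] := eqVneq i l'; first by rewrite flipK eq_sym.
  by have [-> hwil] := flip_other w l' il' hw; rewrite -flipC hwil.
by have [hyl _] := flip_other y l il (hi y); rewrite hyl eqxx in hy.
Qed.

Lemma fdeg_dictator (h : cube n -> bool) i :
  depends_on h i -> (forall l, depends_on h l -> l = i) ->
  fdeg (fun x => sgnb (h x)) = 1%N.
Proof.
move=> hi h_only_i; apply/eqP; rewrite eqn_leq; apply/andP; split.
  apply/fdeg_leP => S gS; rewrite -(cards1 i).
  apply/subset_leq_card/subsetP => l lS; rewrite inE; apply/eqP/h_only_i.
  apply: contraTT gS => hl; apply/negPn/eqP/(fourier_eq0_invariant _ lS) => x.
  by move/existsPn: hl => /(_ x); rewrite negbK => /eqP ->.
rewrite lt0n; apply: contraTneq hi => h0; apply/existsPn => x.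
by rewrite negbK; apply/eqP/sgnb_inj; apply: fdeg0_const h0.
Qed.
End Cube.

Section Neighbourhood.
Variables (T : finType) (R : rel T).
Implicit Types (S : {set T}) (x y z : T).

Definition nbhd S := [set y | [exists x in S, R x y]].

Lemma nbhdP S y : reflect (exists2 x, x \in S & R x y) (y \in nbhd S).
Proof. by rewrite inE; apply: exists_inP. Qed.

Lemma nbhdS S1 S2 : S1 \subset S2 -> nbhd S1 \subset nbhd S2.
Proof.
move=> /subsetP S12; apply/subsetP => y /nbhdP[x xS1 Rxy].
by apply/nbhdP; exists x; first exact: S12.
Qed.

Lemma exists_notin S : (#|S| < #|T|)%N -> exists x, x \notin S.
Proof.
rewrite -(cardsC S) -{1}[#|S|]addn0 ltn_add2l => /card_gt0P[x].
by rewrite inE; exists x.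
Qed.

Hypothesis R_codom : forall y, exists x, R x y.

Lemma card_nbhd_le k : (k < #|T|)%N ->
    (forall S, #|S| = k -> (#|nbhd S| <= k)%N) ->
  forall S, (#|S| <= k)%N -> (#|nbhd S| <= #|S|)%N.
Proof.
(* Induction on k - |S|: pick t outside S, an output y outside N(S ∪ {t}) and
   an input x of y; then x is outside S ∪ {t} and N(S ∪ {x}) contains N(S) and y. *)
move=> k_lt nbhd_k S /subnKC; move: (k - #|S|)%N => d.
elim: d S => [|d IH] S Sk; first by rewrite addn0 in Sk; rewrite Sk nbhd_k.
have S_lt : (#|S| < #|T|)%N by apply: leq_ltn_trans k_lt; rewrite -Sk leq_addr.
have [t tS] := exists_notin S_lt.
have U1_k x : x \notin S -> (#|x |: S| + d = k)%N.
  by move=> xS; rewrite cardsU1 xS addSnnS.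
have nbhd_tS : (#|nbhd (t |: S)| < #|T|)%N.
  apply: leq_ltn_trans k_lt; apply: leq_trans (IH _ (U1_k t tS)) _.
  by rewrite -(U1_k t tS) leq_addr.
have [y ytS] := exists_notin nbhd_tS.
have [x Rxy] := R_codom y.
have xS : x \notin S.
  by apply: contra ytS => xS; apply/nbhdP; exists x; rewrite ?setU1r.
have yS : y \notin nbhd S by apply: contra ytS; apply/subsetP/nbhdS/subsetUr.
have : y |: nbhd S \subset nbhd (x |: S).
  by rewrite subUset nbhdS ?subsetUr // andbT sub1set; apply/nbhdP; exists x; rewrite ?setU11.
move/subset_leq_card/leq_trans/(_ (IH _ (U1_k x xS))).
by rewrite !cardsU1 yS xS.
Qed.

Hypothesis R_dom : forall x, exists y, R x y.

Section Functional.
Hypothesis R_fun : forall x y z, R x y -> R x z -> y = z.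

Let c x := xchoose (R_dom x).

Let R_c x y : R x y = (y == c x).
Proof.
have Rxc : R x (c x) by exact: xchooseP.
by apply/idP/eqP => [Rxy | ->]; first exact: R_fun Rxy Rxc.
Qed.

Let c_inj : injective c.
Proof. by apply: surj_inj => y; have [x] := R_codom y; rewrite R_c => /eqP; exists x. Qed.

Lemma functional_converse x y z : R x z -> R y z -> x = y.
Proof. by rewrite !R_c => /eqP-> /eqP/c_inj. Qed.

Lemma card_nbhd_functional S : #|nbhd S| = #|S|.
Proof.
rewrite -(card_imset S c_inj); apply: eq_card => y.
apply/nbhdP/imsetP => -[x xS]; first by rewrite R_c => /eqP ->; exists x.
by move=> ->; exists x; rewrite // R_c.
Qed.
End Functional.

Lemma nbhd1_functional :
  (forall x, (#|nbhd [set x]| <= 1)%N) -> forall x y z, R x y -> R x z -> y = z.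
Proof.
move=> nbhd1 x y z Rxy Rxz; move/card_le1_eqP: (nbhd1 x); apply;
  by apply/nbhdP; exists x; rewrite ?set11.
Qed.
End Neighbourhood.

Section Influence.
Variables (n : nat) (f : cube n -> cube n).

Definition influences : rel 'I_n := fun i j => depends_on (coordb f j) i.

Lemma influence_nbhdP (S T : {set 'I_n}) :
  (forall j, j \in T -> exists i, i \in S /\ 0 < Inf (coordb f j) i) /\
  (forall j, j \notin T -> forall i, i \in S -> Inf (coordb f j) i = 0) <->
  T = nbhd influences S.
Proof.
split=> [[T_infl notT_infl] | ->].
  apply/setP => j; apply/idP/nbhdP => [/T_infl[i [iS]] | [i iS ij]].
    by rewrite Inf_gt0; exists i.
  by apply: contraLR ij => /notT_infl/(_ i iS)/eqP; rewrite Inf_eq0.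
split=> [j /nbhdP[i iS ij] | j jS i iS]; first by exists i; rewrite Inf_gt0.
by apply/eqP; rewrite Inf_eq0; apply: contra jS => ij; apply/nbhdP; exists i.
Qed.

Hypothesis f_bij : bijective f.

Lemma influences_dom i : exists j, influences i j.
Proof.
pose x : cube n := [ffun=> false].
have [j fj] : exists j, f x j != f (flip x i) j.
  apply/existsP; apply: contraR (flip_neq x i) => /existsPn fx.
  by apply/eqP/(bij_inj f_bij)/ffunP => j; apply/eqP/negbNE; rewrite eq_sym.
by exists j; apply/existsP; exists x.
Qed.

Lemma influences_codom j : exists i, influences i j.
Proof.
apply/existsP; apply: contraT => /existsPn no_infl.
pose x : cube n := [ffun=> false].
have fj_const y : f y j = f x j.
  apply: (cube_flip_ind (P := fun y => f y j = f x j)) (erefl _) => z i <-.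
  by move/existsPn: (no_infl i) => /(_ z); rewrite negbK => /eqP.
case: f_bij => g _ gK.
by have := fj_const (g (flip (f x) j)); rewrite gK flipE eqxx; case: (f x j).
Qed.
End Influence.

Theorem mainTheorem9 (n : nat) (f : cube n -> cube n) (k : nat) :
  (2 <= n)%N -> bijective f -> (1 <= k)%N -> (k <= n - 1)%N ->
  ((forall j : 'I_n, fdeg (coordr f j) = 1%N) <->
   (forall S : {set 'I_n}, #|S| = k ->
      exists T : {set 'I_n}, #|T| = k /\
        (forall j, j \in T -> exists i, i \in S /\ 0 < Inf (coordb f j) i) /\
        (forall j, j \notin T -> forall i, i \in S -> Inf (coordb f j) i = 0))).
Proof.
move=> _ f_bij k_ge1 k_le.
have infl_dom := influences_dom f_bij; have infl_codom := influences_codom f_bij.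
split=> [deg1 S Sk | nbhd_k j].
  have infl_uniq j i l : influences f i j -> influences f l j -> i = l.
    by apply: depends_on_uniq; rewrite deg1.
  have infl_fun i j l : influences f i j -> influences f i l -> j = l.
    exact: (functional_converse infl_dom infl_codom infl_uniq).
  exists (nbhd (influences f) S); split; last exact/influence_nbhdP.
  by rewrite (card_nbhd_functional infl_codom infl_dom infl_fun).
have card_nbhd_k (S : {set 'I_n}) : #|S| = k -> (#|nbhd (influences f) S| <= k)%N.
  by move=> /nbhd_k[T [<- /influence_nbhdP <-]].
have k_lt_n : (k < #|'I_n|)%N by rewrite card_ord; lia.
have infl_fun : forall i j l, influences f i j -> influences f i l -> j = l.
  apply: nbhd1_functional => i; rewrite -(cards1 i).
  by apply: (card_nbhd_le infl_codom k_lt_n card_nbhd_k); rewrite cards1.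
have [i ij] := infl_codom j; apply: (fdeg_dictator ij) => l lj.
exact: functional_converse infl_codom infl_dom infl_fun l i j lj ij.
Qed.
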